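(* Let $n\ge2$ and let $U^+$ be the subalgebra of $U_{r,s}(\mathfrak{so}_{2n+1})$ generated by $e_1,\dots,e_n$, with root vectors as in the context. Then in $U^+$: (1) $\mathcal E_{i,n}\mathcal E_{j,n}-rs\,\mathcal E_{j,n}\mathcal E_{i,n}=\mathcal E_{j,n-1}\mathcal E_{i,n'}-r^2\mathcal E_{i,n'}\mathcal E_{j,n-1}$ for $i<j<n$; (2) $\mathcal E_{j,k}\mathcal E_{i,(k+1)'}-r^2\mathcal E_{i,(k+1)'}\mathcal E_{j,k}=\mathcal E_{i,(k+2)'}\mathcal E_{j,k+1}-s^{-2}\mathcal E_{j,k+1}\mathcal E_{i,(k+2)'}$ for $i<j<k<n-1$; (3) $\mathcal E_{n-1,n}\mathcal E_{n-1,n'}=s^2\mathcal E_{n-1,n'}\mathcal E_{n-1,n}$; (4) $\mathcal E_{i,j'}e_n=(rs)^2e_n\mathcal E_{i,j'}$ for $i<j<n$; (5) $\mathcal E_{i,n'}\mathcal E_{n-1,n}=\mathcal E_{n-1,n}\mathcal E_{i,n'}$ for $i<n-1$; (6) $\mathcal E_{i,n'}\mathcal E_{n-1,n'}=s^2\mathcal E_{n-1,n'}\mathcal E_{i,n'}$ for $i<n-1$; (7) $\mathcal E_{i,(n-1)'}\mathcal E_{n-1,n}=s^2\mathcal E_{n-1,n}\mathcal E_{i,(n-1)'}$ for $i<n-1$; (8) $\mathcal E_{i,(n-1)'}\mathcal E_{n-1,n'}=(rs^2)^2\mathcal E_{n-1,n'}\mathcal E_{i,(n-1)'}$ for $i<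n-1$.
   Context: Let $r,s\in\mathbb C^*$ with $r^3\ne s^3$, $r^4\ne s^4$, $\mathbb K=\mathbb Q(r,s)$. $U_{r,s}(\mathfrak{so}_{2n+1})$ is the $\mathbb K$-algebra generated by $e_i,f_i,\omega_i^{\pm1},\omega_i'^{\pm1}$ ($1\le i\le n$) with: $\omega$'s commute, invertible; $\omega_je_i\omega_j^{-1}=\langle\omega_i',\omega_j\rangle e_i$, $\omega_jf_i\omega_j^{-1}=\langle\omega_i',\omega_j\rangle^{-1}f_i$, $\omega_j'e_i\omega_j'^{-1}=\langle\omega_j',\omega_i\rangle^{-1}e_i$, $\omega_j'f_i\omega_j'^{-1}=\langle\omega_j',\omega_i\rangle f_i$, where $\langle\omega_i',\omega_i\rangle=r^2s^{-2}$ ($i<n$), $\langle\omega_n',\omega_n\rangle=rs^{-1}$, $\langle\omega_i',\omega_{i+1}\rangle=r^{-2}$, $\langle\omega_{i+1}',\omega_i\rangle=s^2$ ($i<n$), others $1$; $e_if_j-f_je_i=\delta_{ij}(\omega_i-\omega_i')/(r_i-s_i)$ ($r_i=r^2,s_i=s^2$ for $i<n$; $r_n=r,s_n=s$); Serre relations $(\mathrm{ad}_le_i)^{1-a_{ij}}(e_j)=0=(\mathrm{ad}_rf_i)^{1-a_{ij}}(f_j)$, $i\ne j$, with $(a_{ij})$ the $B_n$ Cartan matrix ($a_{ii}=2$, $a_{i,i+1}=a_{i+1,i}=-1$ for $i\le n-2$, $a_{n-1,n}=-1$, $a_{n,n-1}=-2$, else $0$), $\mathrm{ad}_l(a)(b)=\sum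 a_{(1)}bS(a_{(2)})$, $\mathrm{ad}_r(a)(b)=\sum S(a_{(1)})ba_{(2)}$, for the Hopf structure $\Delta(\omega)=\omega\otimes\omega$, $\Delta(e_i)=e_i\otimes1+\omega_i\otimes e_i$, $\Delta(f_i)=1\otimes f_i+f_i\otimes\omega_i'$, $S(e_i)=-\omega_i^{-1}e_i$, $S(f_i)=-f_i\omega_i'^{-1}$. Root vectors: $\mathcal E_{i,i}=e_i$, $\mathcal E_{i,j}=e_i\mathcal E_{i+1,j}-r^2\mathcal E_{i+1,j}e_i$ ($1\le i<j\le n$), $\mathcal E_{i,n'}=\mathcal E_{i,n}e_n-rs\,e_n\mathcal E_{i,n}$ ($i\le n-1$), $\mathcal E_{i,j'}=\mathcal E_{i,(j+1)'}e_j-s^{-2}e_j\mathcal E_{i,(j+1)'}$ ($1\le i<j\le n-1$). *)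

From HB Require Import structures.
From mathcomp Require Import all_boot all_order all_algebra.
Set Implicit Arguments. Unset Strict Implicit. Unset Printing Implicit Defensive.
Import Order.TTheory GRing.Theory Num.Theory.
Local Open Scope ring_scope.

(* Two-parameter quantum group U_{r,s}(so_{2n+1}).  Indices are natural
   numbers 1..n; families of generators are functions nat -> A. *)

Section QG.
Variables (F : fieldType) (A : unitAlgType F) (n : nat) (r s : F).

(* <omega_i', omega_j> *)
Definition pairing (i j : nat) : F :=
  if i == j then (if (i < n)%N then r ^+ 2 / s ^+ 2 else r / s)
  else if (j == i.+1) && (i < n)%N then (r ^+ 2)^-1
  else if (i == j.+1) && (j < n)%N then s ^+ 2
  else 1.

Definition ri (i : nat) : F := if (i < n)%N then r ^+ 2 else r.
Definition si (i : nat) : F := if (i < n)%N then s ^+ 2 else s.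

(* 1 - a_ij for the B_n Cartan matrix, i <> j *)
Definition serre_exp (i j : nat) : nat :=
  if (i == n) && (j == n.-1) then 3
  else if (i == j.+1) || (j == i.+1) then 2
  else 1.

(* ad_l(e_i)(b) = e_i b S(1) + omega_i b S(e_i) *)
Definition adl (e w : nat -> A) (i : nat) (b : A) : A :=
  e i * b - w i * b * (w i)^-1 * e i.
(* ad_r(f_i)(b) = S(1) b f_i + S(f_i) b omega_i' *)
Definition adr (f w' : nat -> A) (i : nat) (b : A) : A :=
  b * f i - f i * (w' i)^-1 * b * w' i.

Definition Urs_relations (e f w w' : nat -> A) : Prop :=
  [/\ (forall i, (1 <= i <= n)%N -> w i \is a GRing.unit /\ w' i \is a GRing.unit),
      (forall i j, (1 <= i <= n)%N -> (1 <= j <= n)%N ->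
          [/\ w i * w j = w j * w i, w' i * w' j = w' j * w' i
            & w i * w' j = w' j * w i]),
      (forall i j, (1 <= i <= n)%N -> (1 <= j <= n)%N ->
          [/\ w j * e i * (w j)^-1 = pairing i j *: e i,
              w j * f i * (w j)^-1 = (pairing i j)^-1 *: f i,
              w' j * e i * (w' j)^-1 = (pairing j i)^-1 *: e i
            & w' j * f i * (w' j)^-1 = pairing j i *: f i]),
      (forall i j, (1 <= i <= n)%N -> (1 <= j <= n)%N ->
          e i * f j - f j * e i =
          if i == j then (ri i - si i)^-1 *: (w i - w' i) else 0)
    & (forall i j, (1 <= i <= n)%N -> (1 <= j <= n)%N -> i != j ->
          iter (serre_exp i j) (adl e w i) (e j) = 0 /\
          iter (serre_exp i j) (adr f w' i) (f j) = 0)].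

(* Root vectors.  Epos e i d = E_{i,i+d}. *)
Fixpoint Epos (e : nat -> A) (i d : nat) : A :=
  match d with
  | 0 => e i
  | d'.+1 => e i * Epos e i.+1 d' - r ^+ 2 *: (Epos e i.+1 d' * e i)
  end.
Definition Eroot (e : nat -> A) (i j : nat) : A := Epos e i (j - i).

(* Eprime_aux e i m = E_{i,(n-m)'} *)
Fixpoint Eprime_aux (e : nat -> A) (i m : nat) : A :=
  match m with
  | 0 => Eroot e i n * e n - (r * s) *: (e n * Eroot e i n)
  | m'.+1 => Eprime_aux e i m' * e (n - m'.+1)%N
             - (s ^+ 2)^-1 *: (e (n - m'.+1)%N * Eprime_aux e i m')
  end.
Definition Eprime (e : nat -> A) (i j : nat) : A := Eprime_aux e i (n - j).

End QG.

From HB Require Import structures.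
From mathcomp Require Import all_boot all_order all_algebra.
From mathcomp Require Import ring zify.
Import Order.TTheory GRing.Theory Num.Theory.
Set Implicit Arguments. Unset Strict Implicit. Unset Printing Implicit Defensive.
Local Open Scope ring_scope.

(* With [x, y]_q := x y - q y x, the Serre relations of U^+ say that certain
   iterated q-commutators of the e_i vanish and that e_k, e_l commute for
   |k - l| > 1, and all eight relations follow from these alone.  Each one is
   obtained by writing a nonzero scalar multiple of it (the scalars r^2 + s^2
   and r^2 + r s + s^2 are nonzero because r^4 <> s^4 and r^3 <> s^3) as an
   explicit noncommutative combination of q-commutators already known to vanish;
   such identities are checked by a reflexive normalizer for noncommutative
   polynomials, which may also reorder atoms known to commute.  The vanishing
   q-commutators between root vectors needed along the way are obtained by
   induction on the length of the roots. *)

Section NoncommutativeNormalization.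
Variables (F : fieldType) (A : algType F) (env : seq A).

Inductive ncterm : Type :=
  | NCatom of nat | NCzero | NCone | NCadd of ncterm & ncterm | NCopp of ncterm
  | NCmul of ncterm & ncterm | NCscale of F & ncterm.

Fixpoint nceval (t : ncterm) : A :=
  match t with
  | NCatom k => env`_k | NCzero => 0 | NCone => 1
  | NCadd a b => nceval a + nceval b | NCopp a => - nceval a
  | NCmul a b => nceval a * nceval b | NCscale c a => c *: nceval a
  end.

Definition ncmonom := (F * seq nat)%type.
Definition word_eval (w : seq nat) : A := \prod_(k <- w) env`_k.
Definition ncpoly_eval (p : seq ncmonom) : A := \sum_(m <- p) m.1 *: word_eval m.2.

Definition ncpoly_scale (c : F) (p : seq ncmonom) := [seq (c * m.1, m.2) | m <- p].
Definition ncmonom_mul (m : ncmonom) (p : seq ncmonom) :=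
  [seq (m.1 * x.1, m.2 ++ x.2) | x <- p].
Fixpoint ncpoly_mul (p q : seq ncmonom) :=
  if p is m :: p' then ncmonom_mul m q ++ ncpoly_mul p' q else [::].

Fixpoint ncnorm (t : ncterm) : seq ncmonom :=
  match t with
  | NCatom k => [:: (1, [:: k])] | NCzero => [::] | NCone => [:: (1, [::])]
  | NCadd a b => ncnorm a ++ ncnorm b | NCopp a => ncpoly_scale (-1) (ncnorm a)
  | NCmul a b => ncpoly_mul (ncnorm a) (ncnorm b)
  | NCscale c a => ncpoly_scale c (ncnorm a)
  end.

Lemma ncpoly_eval_cat p q : ncpoly_eval (p ++ q) = ncpoly_eval p + ncpoly_eval q.
Proof. exact: big_cat. Qed.

Lemma ncpoly_eval_scale c p : ncpoly_eval (ncpoly_scale c p) = c *: ncpoly_eval p.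
Proof.
rewrite /ncpoly_eval big_map scaler_sumr; apply: eq_bigr => m _.
by rewrite scalerA.
Qed.

Lemma ncpoly_eval_mul p q : ncpoly_eval (ncpoly_mul p q) = ncpoly_eval p * ncpoly_eval q.
Proof.
elim: p => [|m p IHp] /=; first by rewrite /ncpoly_eval !big_nil mul0r.
rewrite ncpoly_eval_cat IHp /ncpoly_eval big_cons mulrDl big_map.
congr (_ + _); rewrite mulr_sumr; apply: eq_bigr => x _ /=.
by rewrite /word_eval big_cat -scalerAl -scalerAr scalerA.
Qed.

Lemma ncnorm_eval t : ncpoly_eval (ncnorm t) = nceval t.
Proof.
rewrite /ncpoly_eval.
elim: t => [k| | |a IHa b IHb|a IHa|a IHa b IHb|c a IHa] /=.
- by rewrite big_seq1 /word_eval big_seq1 scale1r.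
- by rewrite big_nil.
- by rewrite big_seq1 /word_eval big_nil scale1r.
- by rewrite big_cat IHa IHb.
- by rewrite -/(ncpoly_eval _) ncpoly_eval_scale /ncpoly_eval IHa scaleN1r.
- by rewrite -/(ncpoly_eval _) ncpoly_eval_mul /ncpoly_eval IHa IHb.
- by rewrite -/(ncpoly_eval _) ncpoly_eval_scale /ncpoly_eval IHa.
Qed.

(* Words are bubble-sorted, but two adjacent letters may only be swapped when
   they form one of the declared commuting pairs. *)
Fixpoint commuting_pair (cp : seq (nat * nat)) (x y : nat) : bool :=
  if cp is q :: cp' then
    [|| Nat.eqb q.1 x && Nat.eqb q.2 y, Nat.eqb q.1 y && Nat.eqb q.2 x
      | commuting_pair cp' x y]
  else false.

Fixpoint commuting_pairs_hold (cp : seq (nat * nat)) : Prop :=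
  if cp is q :: cp' then
    env`_q.1 * env`_q.2 = env`_q.2 * env`_q.1 /\ commuting_pairs_hold cp'
  else True.

Fixpoint bubble cp (x : nat) (w : seq nat) : seq nat :=
  if w is y :: w' then
    if Nat.ltb y x && commuting_pair cp x y then y :: bubble cp x w'
    else x :: bubble cp y w'
  else [:: x].

Definition bubble_pass cp (w : seq nat) := if w is x :: w' then bubble cp x w' else [::].
Definition word_sort cp (w : seq nat) := iter (size w) (bubble_pass cp) w.
Definition ncpoly_sort cp (p : seq ncmonom) := [seq (m.1, word_sort cp m.2) | m <- p].

Section Sorting.
Variables (cp : seq (nat * nat)) (cpP : commuting_pairs_hold cp).

Lemma commuting_pairP x y : commuting_pair cp x y -> env`_x * env`_y = env`_y * env`_x.
Proof.
elim: cp cpP => [|[a b] cp' IH] //= [ab_comm /IH {}IH].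
by case/or3P => [|| /IH //] /andP [/PeanoNat.Nat.eqb_eq <- /PeanoNat.Nat.eqb_eq <-].
Qed.

Lemma word_eval_bubble x w : word_eval (bubble cp x w) = env`_x * word_eval w.
Proof.
rewrite /word_eval; elim: w x => [|y w IH] x /=; first by rewrite big_seq1 big_nil mulr1.
case: ifP => [/andP [_ /commuting_pairP xy_comm]|_]; rewrite !big_cons IH //.
by rewrite !mulrA xy_comm.
Qed.

Lemma word_eval_bubble_pass w : word_eval (bubble_pass cp w) = word_eval w.
Proof. by case: w => [|x w] //=; rewrite word_eval_bubble /word_eval big_cons. Qed.

Lemma word_eval_sort w : word_eval (word_sort cp w) = word_eval w.
Proof. by rewrite /word_sort; elim: (size w) => //= k <-; apply: word_eval_bubble_pass. Qed.

Lemma ncpoly_eval_sort p : ncpoly_eval (ncpoly_sort cp p) = ncpoly_eval p.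
Proof. by rewrite /ncpoly_eval big_map; apply: eq_bigr => m _; rewrite word_eval_sort. Qed.

End Sorting.

Fixpoint word_eqb (w1 w2 : seq nat) : bool :=
  match w1, w2 with
  | [::], [::] => true
  | x :: w1', y :: w2' => Nat.eqb x y && word_eqb w1' w2'
  | _, _ => false
  end.

Lemma word_eqbP w1 w2 : word_eqb w1 w2 -> w1 = w2.
Proof.
by elim: w1 w2 => [|x w1 IH] [|y w2] //= /andP [/PeanoNat.Nat.eqb_eq -> /IH ->].
Qed.

Fixpoint word_coef w (p : seq ncmonom) : F :=
  if p is m :: p' then (if word_eqb m.2 w then m.1 else 0) + word_coef w p' else 0.

Fixpoint drop_word w (p : seq ncmonom) : seq ncmonom :=
  if p is m :: p' then (if word_eqb m.2 w then id else cons m) (drop_word w p') else [::].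

Lemma ncpoly_eval_word w p :
  ncpoly_eval p = word_coef w p *: word_eval w + ncpoly_eval (drop_word w p).
Proof.
rewrite /ncpoly_eval; elim: p => [|m p IH] /=; first by rewrite big_nil scale0r add0r.
rewrite big_cons IH; case: ifP => [/word_eqbP ->|_] /=.
  by rewrite scalerDl addrA.
by rewrite add0r big_cons addrCA.
Qed.

(* [fuel] bounds the number of distinct words. *)
Fixpoint ncpoly_zero (fuel : nat) (p : seq ncmonom) : Prop :=
  match p, fuel with
  | [::], _ => True
  | m :: p', fuel'.+1 => m.1 + word_coef m.2 p' = 0 /\ ncpoly_zero fuel' (drop_word m.2 p')
  | _ :: _, 0 => False
  end.

Lemma ncpoly_zero_eval fuel p : ncpoly_zero fuel p -> ncpoly_eval p = 0.
Proof.
elim: fuel p => [|fuel IH] [|m p] //=; rewrite /ncpoly_eval ?big_nil // => -[coef0 /IH].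
rewrite big_cons -/(ncpoly_eval _) (ncpoly_eval_word m.2 p) => ->.
by rewrite addr0 -scalerDl coef0 scale0r.
Qed.

Lemma nceval_eq cp t1 t2 : commuting_pairs_hold cp ->
  let p := ncpoly_sort cp (ncnorm (NCadd t1 (NCopp t2))) in
  ncpoly_zero (size p) p -> nceval t1 = nceval t2.
Proof.
move=> cpP p /ncpoly_zero_eval; rewrite /p ncpoly_eval_sort // ncnorm_eval /=.
by move/eqP; rewrite subr_eq0 => /eqP.
Qed.

End NoncommutativeNormalization.

Definition qcomm (F : fieldType) (A : algType F) (q : F) (x y : A) : A := x * y - q *: (y * x).

Lemma qcomm0l (F : fieldType) (A : algType F) (q : F) (y : A) : qcomm q 0 y = 0.
Proof. by rewrite /qcomm mul0r mulr0 scaler0 subr0. Qed.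

Lemma qcomm0r (F : fieldType) (A : algType F) (q : F) (x : A) : qcomm q x 0 = 0.
Proof. by rewrite /qcomm mul0r mulr0 scaler0 subr0. Qed.

Ltac qcomm0_simpl :=
  rewrite ?(qcomm0l, qcomm0r, mulr0, mul0r, scaler0, addr0, add0r, subr0, sub0r, oppr0).

Ltac nc_mem x l :=
  lazymatch l with
  | nil => constr:(false) | cons x _ => constr:(true) | cons _ ?l' => nc_mem x l'
  end.

Ltac nc_atoms t l :=
  lazymatch t with
  | @GRing.add _ ?a ?b => let l := nc_atoms a l in nc_atoms b l
  | @GRing.opp _ ?a => nc_atoms a l
  | @GRing.mul _ ?a ?b => let l := nc_atoms a l in nc_atoms b l
  | @GRing.scale _ _ _ ?a => nc_atoms a l
  | @GRing.zero _ => l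
  | @GRing.one _ => l
  | _ => lazymatch nc_mem t l with true => l | false => constr:(cons t l) end
  end.

Ltac nc_index x l :=
  lazymatch l with
  | cons x _ => constr:(0%N) | cons _ ?l' => let k := nc_index x l' in constr:(S k)
  end.

Ltac nc_reify F t l :=
  lazymatch t with
  | @GRing.add _ ?a ?b =>
      let x := nc_reify F a l in let y := nc_reify F b l in constr:(@NCadd F x y)
  | @GRing.opp _ ?a => let x := nc_reify F a l in constr:(@NCopp F x)
  | @GRing.mul _ ?a ?b =>
      let x := nc_reify F a l in let y := nc_reify F b l in constr:(@NCmul F x y)
  | @GRing.scale _ _ ?c ?a => let x := nc_reify F a l in constr:(@NCscale F c x)
  | @GRing.zero _ => constr:(@NCzero F)
  | @GRing.one _ => constr:(@NCone F)
  | _ => let k := nc_index t l in constr:(@NCatom F k)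
  end.

Ltac nc_pairs ps l :=
  lazymatch ps with
  | nil => constr:(@nil (nat * nat))
  | cons (?x, ?y) ?ps' =>
      let i := nc_index x l in let j := nc_index y l in
      let cp := nc_pairs ps' l in constr:(cons (i, j) cp)
  end.

(* Proves an identity of the algebra, viewed as a noncommutative polynomial
   identity in its non-ring subterms, where the atoms in the pairs [ps] may
   additionally be commuted; the remaining scalar identities go to [field]. *)
Ltac nc_ring F ps :=
  rewrite /qcomm;
  lazymatch goal with |- ?L = ?R =>
    let T := type of L in
    let l := nc_atoms L (@nil T) in let l := nc_atoms R l in
    let tL := nc_reify F L l in let tR := nc_reify F R l in
    let cp := nc_pairs ps l in
    apply: (@nceval_eq F _ l cp tL tR);
      [ cbv [commuting_pairs_hold nth fst snd]; repeat split; try done; try by symmetry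
      | cbv [ncpoly_zero word_coef drop_word word_eqb ncpoly_sort word_sort iter
             bubble_pass bubble commuting_pair size ncnorm ncpoly_scale ncmonom_mul
             ncpoly_mul cat map Nat.eqb Nat.ltb Nat.leb andb orb negb fst snd];
        repeat split; try done;
        solve [ring | field; repeat (apply/andP; split); by rewrite ?(expf_neq0, mulf_neq0)] ]
  end.

Section QCommutator.
Variables (F : fieldType) (A : algType F).
Implicit Types (x y z : A) (q : F).

Lemma qcomm_eq0 q x y : qcomm q x y = 0 -> x * y = q *: (y * x).
Proof. by move/eqP; rewrite subr_eq0 => /eqP. Qed.

Lemma qcomm1_eq0 x y : x * y = y * x -> qcomm 1 x y = 0.
Proof. by rewrite /qcomm scale1r => ->; rewrite subrr. Qed.

(* The shape of every computation below: [c *: G] is rewritten, by [nc_ring],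
   into a combination [C] of q-commutators already known to vanish. *)
Lemma eq0_of_scaled (c : F) (G C : A) : c != 0 -> c *: G = C -> C = 0 -> G = 0.
Proof. by move=> c_neq0 <- /eqP; rewrite scaler_eq0 (negbTE c_neq0) => /eqP. Qed.

Lemma qcomm_qcommutes_l x y z al be q :
  qcomm al x z = 0 -> qcomm be y z = 0 -> qcomm (al * be) (qcomm q x y) z = 0.
Proof.
move=> xz yz; apply: (@eq0_of_scaled 1 _
  (x * qcomm be y z + be *: (qcomm al x z * y)
   - q *: (y * qcomm al x z + al *: (qcomm be y z * x)))); first exact: oner_neq0.
  by nc_ring F (@nil (A * A)).
by rewrite xz yz; qcomm0_simpl.
Qed.

Lemma qcomm_qcommutes_r x y z al be q :
  qcomm al z x = 0 -> qcomm be z y = 0 -> qcomm (al * be) z (qcomm q x y) = 0.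
Proof.
move=> zx zy; apply: (@eq0_of_scaled 1 _
  (qcomm al z x * y + al *: (x * qcomm be z y)
   - q *: (qcomm be z y * x + be *: (y * qcomm al z x)))); first exact: oner_neq0.
  by nc_ring F (@nil (A * A)).
by rewrite zx zy; qcomm0_simpl.
Qed.

Lemma commute_qcomm x y z q :
  x * z = z * x -> y * z = z * y -> qcomm q x y * z = z * qcomm q x y.
Proof.
move=> /qcomm1_eq0 xz /qcomm1_eq0 yz.
by have := qcomm_qcommutes_l q xz yz; rewrite mulr1 => /qcomm_eq0; rewrite scale1r.
Qed.

Lemma qcommA x y z p q :
  x * z = z * x -> qcomm p (qcomm q x y) z = qcomm q x (qcomm p y z).
Proof. by move=> xz; nc_ring F [:: (x, z)]. Qed.

End QCommutator.

Lemma expr3_neq_sum_neq0 (R : comRingType) (r s : R) :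
  r ^+ 3 != s ^+ 3 -> r ^+ 2 + r * s + s ^+ 2 != 0.
Proof.
apply: contra => /eqP sum0; rewrite -subr_eq0.
have -> : r ^+ 3 - s ^+ 3 = (r - s) * (r ^+ 2 + r * s + s ^+ 2) by ring.
by rewrite sum0 mulr0.
Qed.

Lemma expr4_neq_sum_sqr_neq0 (R : comRingType) (r s : R) :
  r ^+ 4 != s ^+ 4 -> r ^+ 2 + s ^+ 2 != 0.
Proof.
apply: contra => /eqP sum0; rewrite -subr_eq0.
have -> : r ^+ 4 - s ^+ 4 = (r ^+ 2 - s ^+ 2) * (r ^+ 2 + s ^+ 2) by ring.
by rewrite sum0 mulr0.
Qed.

Section SerreRelations.
Variables (F : fieldType) (A : unitAlgType F) (n : nat) (r s : F) (e f w w' : nat -> A).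
Hypotheses (r_neq0 : r != 0) (s_neq0 : s != 0) (HU : Urs_relations n r s e f w w').

Ltac pairing_cases := rewrite /pairing; do ! case: ifP; move=> *; try done; lia.

Lemma pairing_succ_l i : (i < n)%N -> pairing n r s i.+1 i = s ^+ 2.
Proof. by move=> ?; pairing_cases. Qed.

Lemma pairing_succ_r i : (i < n)%N -> pairing n r s i i.+1 = (r ^+ 2)^-1.
Proof. by move=> ?; pairing_cases. Qed.

Lemma pairing_diag i : (i < n)%N -> pairing n r s i i = r ^+ 2 / s ^+ 2.
Proof. by move=> ?; pairing_cases. Qed.

Lemma pairing_diag_last : pairing n r s n n = r / s.
Proof. by pairing_cases. Qed.

Lemma pairing_far i j : (i.+1 < j)%N || (j.+1 < i)%N -> pairing n r s i j = 1.
Proof. by move=> ?; pairing_cases. Qed.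

Definition wconj k (x : A) := w k * x * (w k)^-1.

Lemma w_unit k : (1 <= k <= n)%N -> w k \is a GRing.unit.
Proof. by case: HU => w_units _ _ _ _ /w_units []. Qed.

Lemma wconjM k x y : (1 <= k <= n)%N -> wconj k (x * y) = wconj k x * wconj k y.
Proof. by move=> /w_unit wk; rewrite /wconj !mulrA (mulrVK wk). Qed.

Lemma wconj_qcomm k x y cx cy q : (1 <= k <= n)%N ->
  wconj k x = cx *: x -> wconj k y = cy *: y -> wconj k (qcomm q x y) = (cx * cy) *: qcomm q x y.
Proof.
move=> k_range wx wy; rewrite /qcomm /wconj mulrBr mulrBl -scalerAr -scalerAl.
rewrite -!/(wconj k _) !wconjM // wx wy -!scalerAl -!scalerAr !scalerA scalerBr scalerA.
by congr (_ - _ *: _); ring.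
Qed.

Lemma wconj_e i j : (1 <= i <= n)%N -> (1 <= j <= n)%N ->
  wconj j (e i) = pairing n r s i j *: e i.
Proof. by case: HU => _ _ w_act _ _ i_range j_range; case: (w_act i j i_range j_range). Qed.

Lemma adl_qcomm k x c : wconj k x = c *: x -> adl e w k x = qcomm c (e k) x.
Proof. by rewrite /adl /qcomm /wconj => ->; rewrite -scalerAl. Qed.

Lemma serre_adl i j : (1 <= i <= n)%N -> (1 <= j <= n)%N -> i != j ->
  iter (serre_exp n i j) (adl e w i) (e j) = 0.
Proof. by case: HU => _ _ _ _ serre i_range j_range ij; case: (serre i j i_range j_range ij). Qed.

Ltac serre_exp_cases := rewrite /serre_exp; do ! case: ifP; move=> *; try done; lia.

Lemma e_comm_far k l : (1 <= k <= n)%N -> (1 <= l <= n)%N -> (k.+1 < l)%N || (l.+1 < k)%N ->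
  e k * e l = e l * e k.
Proof.
move=> k_range l_range far.
have neq : k != l by apply/eqP; lia.
have := serre_adl k_range l_range neq.
have -> : serre_exp n k l = 1%N by serre_exp_cases.
rewrite /= (adl_qcomm (wconj_e l_range k_range)) pairing_far; last by lia.
by move/qcomm_eq0; rewrite scale1r.
Qed.

Lemma serre_qcommL i : (1 <= i)%N -> (i < n)%N ->
  qcomm (s ^+ 2) (e i) (qcomm (r ^+ 2) (e i) (e i.+1)) = 0.
Proof.
move=> i_ge1 i_lt_n.
have i_range : (1 <= i <= n)%N by lia.
have i1_range : (1 <= i.+1 <= n)%N by lia.
have neq : i != i.+1 by apply/eqP; lia.
have := serre_adl i_range i1_range neq.
have -> : serre_exp n i i.+1 = 2%N by serre_exp_cases.
rewrite /= (adl_qcomm (wconj_e i1_range i_range)).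
rewrite (adl_qcomm (wconj_qcomm _ i_range (wconj_e i_range i_range) (wconj_e i1_range i_range))).
rewrite pairing_succ_l // pairing_diag // => serre.
apply: (@eq0_of_scaled _ _ 1 _ _ (oner_neq0 _) _ serre); nc_ring F (@nil (A * A)).
Qed.

Lemma serre_qcommR i : (1 <= i)%N -> (i.+1 < n)%N ->
  qcomm (s ^+ 2) (qcomm (r ^+ 2) (e i) (e i.+1)) (e i.+1) = 0.
Proof.
move=> i_ge1 i1_lt_n.
have i_range : (1 <= i <= n)%N by lia.
have i1_range : (1 <= i.+1 <= n)%N by lia.
have neq : i.+1 != i by apply/eqP; lia.
have := serre_adl i1_range i_range neq.
have -> : serre_exp n i.+1 i = 2%N by serre_exp_cases.
rewrite /= (adl_qcomm (wconj_e i_range i1_range)).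
rewrite (adl_qcomm (wconj_qcomm _ i1_range (wconj_e i1_range i1_range) (wconj_e i_range i1_range))).
rewrite pairing_succ_r // pairing_diag // => serre.
have c_neq0 : (r ^+ 2 * s ^+ 2)^-1 != 0 by rewrite invr_eq0 mulf_neq0 // expf_neq0.
apply: (@eq0_of_scaled _ _ _ _ _ c_neq0 _ serre); nc_ring F (@nil (A * A)).
Qed.

Lemma serre_qcomm_last : (2 <= n)%N ->
  qcomm (s ^+ 2) (qcomm (r * s) (qcomm (r ^+ 2) (e n.-1) (e n)) (e n)) (e n) = 0.
Proof.
move=> n_ge2.
have n1_range : (1 <= n.-1 <= n)%N by lia.
have n_range : (1 <= n <= n)%N by lia.
have neq : n != n.-1 by apply/eqP; lia.
have := serre_adl n_range n1_range neq.
have -> : serre_exp n n n.-1 = 3%N by rewrite /serre_exp !eqxx.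
have wn := wconj_e n_range n_range.
have wn1 := wconj_e n1_range n_range.
rewrite /= (adl_qcomm wn1) (adl_qcomm (wconj_qcomm _ n_range wn wn1)).
rewrite (adl_qcomm (wconj_qcomm _ n_range wn (wconj_qcomm _ n_range wn wn1))).
rewrite (_ : pairing n r s n.-1 n = (r ^+ 2)^-1); last by pairing_cases.
rewrite pairing_diag_last => serre.
have c_neq0 : - (r ^+ 3 * s ^+ 3)^-1 != 0 by rewrite oppr_eq0 invr_eq0 mulf_neq0 // expf_neq0.
apply: (@eq0_of_scaled _ _ _ _ _ c_neq0 _ serre); nc_ring F (@nil (A * A)).
Qed.

End SerreRelations.

Section RootVectors.
Variables (F : fieldType) (A : unitAlgType F) (n : nat) (r s : F) (e : nat -> A).
Hypotheses (r_neq0 : r != 0) (s_neq0 : s != 0) (n_ge2 : (2 <= n)%N).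
Hypotheses (rs2_neq0 : r ^+ 2 + s ^+ 2 != 0) (rs3_neq0 : r ^+ 2 + r * s + s ^+ 2 != 0).
Hypothesis e_comm_far : forall k l, (1 <= k <= n)%N -> (1 <= l <= n)%N ->
  (k.+1 < l)%N || (l.+1 < k)%N -> e k * e l = e l * e k.
Hypothesis serre_qcommL : forall i, (1 <= i)%N -> (i < n)%N ->
  qcomm (s ^+ 2) (e i) (qcomm (r ^+ 2) (e i) (e i.+1)) = 0.
Hypothesis serre_qcommR : forall i, (1 <= i)%N -> (i.+1 < n)%N ->
  qcomm (s ^+ 2) (qcomm (r ^+ 2) (e i) (e i.+1)) (e i.+1) = 0.
Hypothesis serre_qcomm_last :
  qcomm (s ^+ 2) (qcomm (r * s) (qcomm (r ^+ 2) (e n.-1) (e n)) (e n)) (e n) = 0.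

Notation E := (Eroot r e).
Notation E' := (Eprime n r s e).

Lemma Epos_comm x i d : (forall l, (i <= l <= i + d)%N -> e l * x = x * e l) ->
  Epos r e i d * x = x * Epos r e i d.
Proof.
elim: d i => [|d IH] i el_comm /=; first by apply: el_comm; rewrite addn0 leqnn.
apply: commute_qcomm; first by apply: el_comm; lia.
by apply: IH => l l_range; apply: el_comm; lia.
Qed.

Lemma Epos_split i a b : (1 <= i)%N -> (i + a + b < n)%N ->
  Epos r e i (a + b).+1 = qcomm (r ^+ 2) (Epos r e i a) (Epos r e (i + a).+1 b).
Proof.
elim: a i => [|a IH] i i_ge1 top_lt_n; first by rewrite add0n addn0.
rewrite addSn /= -/(qcomm (r ^+ 2) (e i) (Epos r e i.+1 (a + b).+1)) IH; [|lia|lia].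
rewrite -qcommA ?addSnnS //.
by apply/esym/Epos_comm => l l_range; apply: e_comm_far; lia.
Qed.

Lemma Eroot_diag i : E i i = e i.
Proof. by rewrite /Eroot subnn. Qed.

Lemma Eroot_first i j : (i < j)%N -> E i j = qcomm (r ^+ 2) (e i) (E i.+1 j).
Proof. by move=> ij; rewrite /Eroot -(subnSK ij). Qed.

Lemma Eroot_split i k m : (1 <= i <= k)%N -> (k < m <= n)%N ->
  E i m = qcomm (r ^+ 2) (E i k) (E k.+1 m).
Proof.
move=> ik km; rewrite /Eroot.
rewrite (_ : m - i = ((k - i) + (m - k.+1)).+1)%N; last by lia.
rewrite Epos_split; [|lia|lia].
by rewrite (_ : (i + (k - i)).+1 = k.+1); last by lia.
Qed.

Lemma Eroot_last i m : (1 <= i < m)%N -> (m <= n)%N -> E i m = qcomm (r ^+ 2) (E i m.-1) (e m).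
Proof.
move=> im m_le_n; rewrite (@Eroot_split i m.-1 m); [|lia|lia].
by rewrite prednK ?Eroot_diag //; lia.
Qed.

Lemma Eroot_comm_e_far k i j : (1 <= k <= n)%N -> (1 <= i <= j)%N -> (j <= n)%N ->
  (k.+1 < i)%N || (j.+1 < k)%N -> E i j * e k = e k * E i j.
Proof.
move=> k_range ij j_le_n far; rewrite /Eroot; apply: Epos_comm => l l_range.
apply: e_comm_far; lia.
Qed.

Lemma Eroot_top : E n.-1 n = qcomm (r ^+ 2) (e n.-1) (e n).
Proof. by rewrite Eroot_first ?prednK ?Eroot_diag //; lia. Qed.

Lemma serre_qcommL_top : qcomm (s ^+ 2) (e n.-1) (qcomm (r ^+ 2) (e n.-1) (e n)) = 0.
Proof. by have := @serre_qcommL n.-1; rewrite prednK //; [apply|..]; lia. Qed.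

Lemma Eprime_aux0 i : Eprime_aux n r s e i 0 = qcomm (r * s) (E i n) (e n).
Proof. by []. Qed.

Lemma Eprime_auxS i d :
  Eprime_aux n r s e i d.+1 = qcomm (s ^+ 2)^-1 (Eprime_aux n r s e i d) (e (n - d.+1)).
Proof. by []. Qed.

Lemma Eprime_top i : E' i n = qcomm (r * s) (E i n) (e n).
Proof. by rewrite /Eprime subnn. Qed.

Lemma Eprime_top_pred i : E' i n.-1 = qcomm (s ^+ 2)^-1 (E' i n) (e n.-1).
Proof.
rewrite /Eprime subnn (_ : n - n.-1 = 1)%N; last by lia.
by rewrite Eprime_auxS subn1.
Qed.

Lemma qcomm_Eroot_e_last i m : (1 <= i < m)%N -> (m < n)%N -> qcomm (s ^+ 2) (E i m) (e m) = 0.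
Proof.
move=> im m_lt_n; have [d m_eq] : exists d, m = (i + d).+1 by exists (m - i).-1; lia.
elim: d i im m_eq => [|d IH] i im m_eq.
  by rewrite m_eq addn0 (Eroot_first (ltnSn i)) Eroot_diag; apply: serre_qcommR; lia.
rewrite (@Eroot_first i m); last by lia.
rewrite -(mul1r (s ^+ 2)); apply: qcomm_qcommutes_l; last by apply: IH; lia.
by apply: qcomm1_eq0; apply: e_comm_far; lia.
Qed.

Lemma qcomm_e_first_Eroot i m : (1 <= i < m)%N -> (m <= n)%N -> qcomm (s ^+ 2) (e i) (E i m) = 0.
Proof.
elim: m => [|m IH] im m_le_n; first by lia.
have [i_lt_m|i_eq_m] : (i < m)%N \/ i = m by lia.
  rewrite (@Eroot_last i m.+1) /=; [|lia|lia].
  rewrite -(mulr1 (s ^+ 2)); apply: qcomm_qcommutes_r; first by apply: IH; lia.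
  by apply: qcomm1_eq0; apply: e_comm_far; lia.
by rewrite i_eq_m (Eroot_first (ltnSn m)) Eroot_diag; apply: serre_qcommL; lia.
Qed.

Lemma qcomm_Eroot_prefix i k m : (1 <= i <= k)%N -> (k < m <= n)%N ->
  qcomm (s ^+ 2) (E i k) (E i m) = 0.
Proof.
move=> ik km; have [d k_eq] : exists d, k = (i + d)%N by exists (k - i)%N; lia.
elim: d i ik k_eq => [|d IH] i ik k_eq.
  by rewrite k_eq addn0 Eroot_diag; apply: qcomm_e_first_Eroot; lia.
have tails : qcomm (s ^+ 2) (E i.+1 k) (E i.+1 m) = 0 by apply: IH; lia.
have ek : qcomm (s ^+ 2) (e i) (E i k) = 0 by apply: qcomm_e_first_Eroot; lia.
have em : qcomm (s ^+ 2) (e i) (E i m) = 0 by apply: qcomm_e_first_Eroot; lia.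
rewrite (@Eroot_first i k) in ek *; last by lia.
rewrite (@Eroot_first i m) in em *; last by lia.
move: tails ek em; set x := e i; set P := E i.+1 k; set Q := E i.+1 m => tails ek em.
apply: (@eq0_of_scaled _ _ (r ^+ 2 + s ^+ 2) _
  (qcomm (r ^+ 2 * s ^+ 2) x (qcomm (r ^+ 4) x (qcomm (s ^+ 2) P Q))
   - (qcomm (s ^+ 2) x (qcomm (r ^+ 2) x P) * Q
      + r ^+ 4 *: (P * qcomm (s ^+ 2) x (qcomm (r ^+ 2) x Q))
      - s ^+ 2 *: (qcomm (s ^+ 2) x (qcomm (r ^+ 2) x Q) * P)
      - (s ^+ 2 * r ^+ 4) *: (Q * qcomm (s ^+ 2) x (qcomm (r ^+ 2) x P)))) rs2_neq0).
  by nc_ring F (@nil (A * A)).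
by rewrite tails ek em; qcomm0_simpl.
Qed.

Lemma qcomm_Eroot_suffix i j m : (1 <= i < j)%N -> (j <= m)%N -> (m < n)%N ->
  qcomm (s ^+ 2) (E i m) (E j m) = 0.
Proof.
move=> ij jm m_lt_n; have [d m_eq] : exists d, m = (j + d)%N by exists (m - j)%N; lia.
elim: d m jm m_lt_n m_eq => [|d IH] m jm m_lt_n m_eq.
  by rewrite m_eq addn0 Eroot_diag; apply: qcomm_Eroot_e_last; lia.
have heads : qcomm (s ^+ 2) (E i m.-1) (E j m.-1) = 0 by apply: IH; lia.
have Pm : qcomm (s ^+ 2) (E i m) (e m) = 0 by apply: qcomm_Eroot_e_last; lia.
have Qm : qcomm (s ^+ 2) (E j m) (e m) = 0 by apply: qcomm_Eroot_e_last; lia.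
rewrite (@Eroot_last i m) in Pm *; [|lia|lia].
rewrite (@Eroot_last j m) in Qm *; [|lia|lia].
move: heads Pm Qm; set c := e m; set P := E i m.-1; set Q := E j m.-1 => heads Pm Qm.
apply: (@eq0_of_scaled _ _ (r ^+ 2 + s ^+ 2) _
  (qcomm (r ^+ 2 * s ^+ 2) (qcomm (r ^+ 4) (qcomm (s ^+ 2) P Q) c) c
   - (P * qcomm (s ^+ 2) (qcomm (r ^+ 2) Q c) c
      + r ^+ 4 *: (qcomm (s ^+ 2) (qcomm (r ^+ 2) P c) c * Q)
      - s ^+ 2 *: (Q * qcomm (s ^+ 2) (qcomm (r ^+ 2) P c) c)
      - (s ^+ 2 * r ^+ 4) *: (qcomm (s ^+ 2) (qcomm (r ^+ 2) Q c) c * P))) rs2_neq0).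
  by nc_ring F (@nil (A * A)).
by rewrite heads Pm Qm; qcomm0_simpl.
Qed.

Lemma qcomm_Eprime_top_en i : (1 <= i < n)%N -> qcomm (s ^+ 2) (E' i n) (e n) = 0.
Proof.
rewrite Eprime_top => i_range; have [i_lt|->] : (i < n.-1)%N \/ i = n.-1 by lia.
  rewrite (@Eroot_last i n) ?(@Eroot_last i n.-1); [|lia|lia|lia|lia].
  have far : E i n.-1.-1 * e n = e n * E i n.-1.-1 by apply: Eroot_comm_e_far; lia.
  apply: (@eq0_of_scaled _ _ 1 _ (qcomm (r ^+ 2) (E i n.-1.-1)
     (qcomm (s ^+ 2) (qcomm (r * s) (qcomm (r ^+ 2) (e n.-1) (e n)) (e n)) (e n))) (oner_neq0 _)).
    by nc_ring F [:: (E i n.-1.-1, e n)].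
  by rewrite serre_qcomm_last; qcomm0_simpl.
by rewrite Eroot_top.
Qed.

Lemma qcomm_Eroot_Eprime_top : qcomm (s ^+ 2) (E n.-1 n) (E' n.-1 n) = 0.
Proof.
have rs_neq0 : r * s != 0 by rewrite mulf_neq0.
rewrite Eprime_top Eroot_top; set a := e n.-1; set b := e n.
apply: (@eq0_of_scaled _ _ (r * s) _
  (qcomm (r ^+ 2 * s ^+ 2) (qcomm (r ^+ 3 * s) (qcomm (s ^+ 2) a (qcomm (r ^+ 2) a b)) b) b
   - a * qcomm (s ^+ 2) (qcomm (r * s) (qcomm (r ^+ 2) a b) b) b
   + (r ^+ 4 * s ^+ 2) *: (qcomm (s ^+ 2) (qcomm (r * s) (qcomm (r ^+ 2) a b) b) b * a)) rs_neq0).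
  by nc_ring F (@nil (A * A)).
by rewrite serre_qcommL_top serre_qcomm_last; qcomm0_simpl.
Qed.

Lemma Eroot_comm_e_middle2 i : (1 <= i)%N -> (i.+2 <= n)%N -> E i i.+2 * e i.+1 = e i.+1 * E i i.+2.
Proof.
move=> i_ge1 i2_le_n.
rewrite (@Eroot_last i i.+2) /=; [|lia|lia].
rewrite (@Eroot_first i i.+1) ?Eroot_diag; last by lia.
have serreL : qcomm (s ^+ 2) (e i.+1) (qcomm (r ^+ 2) (e i.+1) (e i.+2)) = 0.
  by apply: serre_qcommL; lia.
have serreR : qcomm (s ^+ 2) (qcomm (r ^+ 2) (e i) (e i.+1)) (e i.+1) = 0.
  by apply: serre_qcommR; lia.
have far : e i * e i.+2 = e i.+2 * e i by apply: e_comm_far; lia.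
suff /qcomm_eq0 : qcomm 1 (e i.+1) (qcomm (r ^+ 2) (qcomm (r ^+ 2) (e i) (e i.+1)) (e i.+2)) = 0.
  by rewrite scale1r.
apply: (@eq0_of_scaled _ _ (r ^+ 2 + s ^+ 2) _
  (e i * qcomm (s ^+ 2) (e i.+1) (qcomm (r ^+ 2) (e i.+1) (e i.+2))
   - r ^+ 4 *: (qcomm (s ^+ 2) (e i.+1) (qcomm (r ^+ 2) (e i.+1) (e i.+2)) * e i)
   - qcomm (s ^+ 2) (qcomm (r ^+ 2) (e i) (e i.+1)) (e i.+1) * e i.+2
   + r ^+ 4 *: (e i.+2 * qcomm (s ^+ 2) (qcomm (r ^+ 2) (e i) (e i.+1)) (e i.+1))) rs2_neq0).
  by nc_ring F [:: (e i, e i.+2)].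
by rewrite serreL serreR; qcomm0_simpl.
Qed.

Lemma Eroot_comm_e_middle i l m : (1 <= i < l)%N -> (l < m <= n)%N -> E i m * e l = e l * E i m.
Proof.
move=> il lm; have [d l_eq] : exists d, l = (i + d).+1 by exists (l - i).-1; lia.
elim: d i il l_eq => [|d IH] i il l_eq.
  rewrite addn0 in l_eq; subst l.
  have [k m_eq] : exists k, m = (i.+2 + k)%N by exists (m - i.+2)%N; lia.
  elim: k m lm m_eq => [|k IHk] m lm m_eq.
    by rewrite m_eq addn0; apply: Eroot_comm_e_middle2; lia.
  rewrite (@Eroot_last i m); [|lia|lia].
  apply: commute_qcomm; first by apply: IHk; lia.
  by apply: e_comm_far; lia.
rewrite (@Eroot_first i m); last by lia.
apply: commute_qcomm; last by apply: IH; lia.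
by apply: e_comm_far; lia.
Qed.

Lemma Eprime_aux_comm_e i l d : (1 <= i < l)%N -> (l.+2 <= n - d)%N ->
  Eprime_aux n r s e i d * e l = e l * Eprime_aux n r s e i d.
Proof.
move=> il; elim: d => [|d IH] l_lt.
  rewrite Eprime_aux0; apply: commute_qcomm; first by apply: Eroot_comm_e_middle; lia.
  by apply: e_comm_far; lia.
rewrite Eprime_auxS; apply: commute_qcomm; first by apply: IH; lia.
by apply: e_comm_far; lia.
Qed.

Lemma Eroot_comm_Eprime_aux i j k d : (1 <= i < j)%N -> (j <= k)%N -> (k.+2 <= n - d)%N ->
  E j k * Eprime_aux n r s e i d = Eprime_aux n r s e i d * E j k.
Proof.
move=> ij jk k_lt; rewrite /Eroot; apply: Epos_comm => l l_range.
by apply/esym/Eprime_aux_comm_e; lia.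
Qed.

Lemma qcomm_Eroot_n_Eroot_n i j : (1 <= i)%N -> (i < j)%N -> (j < n)%N ->
  qcomm (r * s) (E i n) (E j n) = qcomm (r ^+ 2) (E j n.-1) (E' i n).
Proof.
move=> i_ge1 ij j_lt_n.
have suffix : qcomm (s ^+ 2) (E i n.-1) (E j n.-1) = 0 by apply: qcomm_Eroot_suffix; lia.
have prefix : qcomm (s ^+ 2) (E j n.-1) (E j n) = 0 by apply: qcomm_Eroot_prefix; lia.
have far : E i j.-1 * e n = e n * E i j.-1 by apply: Eroot_comm_e_far; lia.
rewrite Eprime_top (@Eroot_last j n) in prefix *; [|lia|lia].
rewrite (@Eroot_last i n); [|lia|lia].
rewrite (@Eroot_split i j.-1 n.-1) in suffix *; [|lia|lia].
rewrite prednK in suffix *; last by lia.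
set Z := E i j.-1 in far *; set Y := E j n.-1 in suffix prefix *; set b := e n in far prefix *.
apply/eqP; rewrite -subr_eq0; apply/eqP.
apply: (@eq0_of_scaled _ _ (r ^+ 2 + s ^+ 2) _
  (qcomm (r ^+ 3 * s) (qcomm (r ^+ 4) (qcomm (s ^+ 2) (qcomm (r ^+ 2) Z Y) Y) b) b
   - Z * qcomm (r ^+ 3 * s) (qcomm (s ^+ 2) Y (qcomm (r ^+ 2) Y b)) b
   + r ^+ 4 *: (qcomm (r ^+ 3 * s) (qcomm (s ^+ 2) Y (qcomm (r ^+ 2) Y b)) b * Z)) rs2_neq0).
  by nc_ring F [:: (Z, b)].
by rewrite suffix prefix; qcomm0_simpl.
Qed.

Lemma qcomm_Eroot_Eprime_shift i j k : (1 <= i)%N -> (i < j)%N -> (j < k)%N -> (k < n.-1)%N ->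
  qcomm (r ^+ 2) (E j k) (E' i k.+1) = qcomm (s ^+ 2)^-1 (E' i k.+2) (E j k.+1).
Proof.
move=> i_ge1 ij jk k_lt.
rewrite /Eprime (_ : n - k.+1 = (n - k.+2).+1)%N; last by lia.
rewrite Eprime_auxS (_ : n - (n - k.+2).+1 = k.+1)%N; last by lia.
rewrite (@Eroot_last j k.+1) /=; [|lia|lia].
have comm := @Eroot_comm_Eprime_aux i j k (n - k.+2) ltac:(lia) ltac:(lia) ltac:(lia).
set P := Eprime_aux n r s e i (n - k.+2) in comm *; set Y := E j k in comm *.
by nc_ring F [:: (Y, P)].
Qed.

Lemma Eprime_n_comm_Eroot_top i : (1 <= i)%N -> (i < n.-1)%N -> E' i n * E n.-1 n = E n.-1 n * E' i n.
Proof.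
move=> i_ge1 i_lt.
suff /qcomm_eq0 : qcomm 1 (E' i n) (E n.-1 n) = 0 by rewrite scale1r.
have hi : qcomm (s ^+ 2) (E i n.-1) (e n.-1) = 0 by apply: qcomm_Eroot_e_last; lia.
have hn : qcomm (s ^+ 2) (E' i n) (e n) = 0 by apply: qcomm_Eprime_top_en; lia.
have top := qcomm_Eroot_Eprime_top.
have far : E i n.-1.-1 * e n = e n * E i n.-1.-1 by apply: Eroot_comm_e_far; lia.
rewrite Eprime_top Eroot_top in top; rewrite Eprime_top in hn; rewrite Eprime_top Eroot_top.
rewrite (@Eroot_last i n) in hn *; [|lia|lia].
rewrite (@Eroot_last i n.-1) in hi hn *; [|lia|lia].
set X := E i n.-1.-1 in hi hn far *; set a := e n.-1 in hi hn top *.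
set b := e n in hn top far *.
have c_neq0 : (r ^+ 2 + r * s + s ^+ 2) * (r ^+ 2 + s ^+ 2) != 0 by rewrite mulf_neq0.
apply: (@eq0_of_scaled _ _ _ _
  (qcomm (r ^+ 2 * s ^+ 2)
     (qcomm (r ^+ 3 * s) (qcomm (r ^+ 4) (qcomm (s ^+ 2) (qcomm (r ^+ 2) X a) a) b) b) b
   - (qcomm (r ^+ 2) X a * qcomm (s ^+ 2) (qcomm (r * s) (qcomm (r ^+ 2) a b) b) b
      + r ^+ 6 *: (qcomm (s ^+ 2) (qcomm (r * s) (qcomm (r ^+ 2) (qcomm (r ^+ 2) X a) b) b) b * a)
      - s ^+ 2 *: (a * qcomm (s ^+ 2) (qcomm (r * s) (qcomm (r ^+ 2) (qcomm (r ^+ 2) X a) b) b) b)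
      - (r ^+ 6 * s ^+ 2) *:
          (qcomm (s ^+ 2) (qcomm (r * s) (qcomm (r ^+ 2) a b) b) b * qcomm (r ^+ 2) X a))
   - (r ^+ 2 + r * s + s ^+ 2) *:
       (X * qcomm (s ^+ 2) (qcomm (r ^+ 2) a b) (qcomm (r * s) (qcomm (r ^+ 2) a b) b))
   + ((r ^+ 2 + r * s + s ^+ 2) * r ^+ 4) *:
       (qcomm (s ^+ 2) (qcomm (r ^+ 2) a b) (qcomm (r * s) (qcomm (r ^+ 2) a b) b) * X)) c_neq0).
  by nc_ring F [:: (X, b)].
by rewrite hi hn top serre_qcomm_last; qcomm0_simpl.
Qed.

Lemma qcomm_Eprime_n_Eprime_top i : (1 <= i)%N -> (i < n.-1)%N ->
  qcomm (s ^+ 2) (E' i n) (E' n.-1 n) = 0.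
Proof.
move=> i_ge1 i_lt.
have comm := qcomm1_eq0 (Eprime_n_comm_Eroot_top i_ge1 i_lt).
have hn : qcomm (s ^+ 2) (E' i n) (e n) = 0 by apply: qcomm_Eprime_top_en; lia.
rewrite [E' n.-1 n]Eprime_top.
set P := E' i n in comm hn *; set u := E n.-1 n in comm *; set b := e n in hn *.
apply: (@eq0_of_scaled _ _ 1 _
  (qcomm (r * s ^+ 3) (qcomm 1 P u) b - (r * s) *: (qcomm (s ^+ 2) P b * u)
   + u * qcomm (s ^+ 2) P b) (oner_neq0 _)).
  by nc_ring F (@nil (A * A)).
by rewrite comm hn; qcomm0_simpl.
Qed.

Lemma qcomm_Eprime_n1_Eroot_top i : (1 <= i)%N -> (i < n.-1)%N ->
  qcomm (s ^+ 2) (E' i n.-1) (E n.-1 n) = 0.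
Proof.
move=> i_ge1 i_lt.
have comm := qcomm1_eq0 (Eprime_n_comm_Eroot_top i_ge1 i_lt).
have serreL := serre_qcommL_top; rewrite -Eroot_top in serreL.
rewrite Eprime_top_pred.
set P := E' i n in comm *; set u := E n.-1 n in comm serreL *; set a := e n.-1 in serreL *.
apply: (@eq0_of_scaled _ _ 1 _
  (s ^+ 2 *: (qcomm 1 P u * a) + P * qcomm (s ^+ 2) a u
   - (s ^+ 2)^-1 *: (qcomm (s ^+ 2) a u * P) - (s ^+ 2)^-1 *: (a * qcomm 1 P u)) (oner_neq0 _)).
  by nc_ring F (@nil (A * A)).
by rewrite comm serreL; qcomm0_simpl.
Qed.

Lemma qcomm_Eprime_n1_Eprime_top i : (1 <= i)%N -> (i < n.-1)%N ->
  qcomm ((r * s ^+ 2) ^+ 2) (E' i n.-1) (E' n.-1 n) = 0.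
Proof.
move=> i_ge1 i_lt.
have comm := qcomm1_eq0 (Eprime_n_comm_Eroot_top i_ge1 i_lt).
have hs := qcomm_Eprime_n_Eprime_top i_ge1 i_lt.
have serreL := serre_qcommL_top.
rewrite Eprime_top_pred [E' n.-1 n]Eprime_top in hs *.
rewrite Eroot_top in comm hs *.
set P := E' i n in comm hs *; set a := e n.-1 in comm hs serreL *.
set b := e n in comm hs serreL *.
apply: (@eq0_of_scaled _ _ 1 _
  ((r ^+ 2 * s ^+ 2) *: (qcomm (s ^+ 2) P (qcomm (r * s) (qcomm (r ^+ 2) a b) b) * a)
   + (s ^+ 2 - r * s) *: (qcomm (r ^+ 2) a b * qcomm 1 P (qcomm (r ^+ 2) a b)
                          + qcomm 1 P (qcomm (r ^+ 2) a b) * qcomm (r ^+ 2) a b)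
   + P * qcomm (r ^+ 3 * s) (qcomm (s ^+ 2) a (qcomm (r ^+ 2) a b)) b
   - qcomm (r ^+ 3 * s) (qcomm (s ^+ 2) a (qcomm (r ^+ 2) a b)) b * P
   - (s ^+ 2)^-1 *: (a * qcomm (s ^+ 2) P (qcomm (r * s) (qcomm (r ^+ 2) a b) b)))
  (oner_neq0 _)).
  by nc_ring F (@nil (A * A)).
by rewrite comm hs serreL; qcomm0_simpl.
Qed.

Lemma qcomm_Eprime_en i j : (1 <= i)%N -> (i < j)%N -> (j < n)%N ->
  qcomm ((r * s) ^+ 2) (E' i j) (e n) = 0.
Proof.
move=> i_ge1 ij j_lt_n; rewrite /Eprime.
have [d d_eq] : exists d, (n - j = d.+1)%N by exists (n - j).-1; lia.
have d_lt : (i + d.+1 < n)%N by lia.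
rewrite d_eq {j ij j_lt_n d_eq}.
elim: d d_lt => [|d IH] d_lt.
  have comm : qcomm 1 (E' i n) (E n.-1 n) = 0.
    by apply/qcomm1_eq0/Eprime_n_comm_Eroot_top; lia.
  have hn : qcomm (s ^+ 2) (E' i n) (e n) = 0 by apply: qcomm_Eprime_top_en; lia.
  rewrite Eprime_auxS Eprime_aux0 subn1 -Eprime_top.
  rewrite Eroot_top in comm.
  set P := E' i n in comm hn *; set a := e n.-1 in comm *; set b := e n in comm hn *.
  apply: (@eq0_of_scaled _ _ 1 _
    (qcomm 1 P (qcomm (r ^+ 2) a b) - (s ^+ 2)^-1 *: (a * qcomm (s ^+ 2) P b)
     + r ^+ 2 *: (qcomm (s ^+ 2) P b * a)) (oner_neq0 _)).
    by nc_ring F (@nil (A * A)).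
  by rewrite comm hn; qcomm0_simpl.
rewrite Eprime_auxS -(mulr1 ((r * s) ^+ 2)); apply: qcomm_qcommutes_l; first by apply: IH; lia.
by apply: qcomm1_eq0; apply: e_comm_far; lia.
Qed.

End RootVectors.

Unset Implicit Arguments.

Theorem lemma3p4 (F : fieldType) (A : unitAlgType F) (n : nat) (r s : F)
  (e f w w' : nat -> A) :
  [pchar F] =i pred0 ->
  r != 0 -> s != 0 -> r ^+ 3 != s ^+ 3 -> r ^+ 4 != s ^+ 4 ->
  (2 <= n)%N ->
  Urs_relations n r s e f w w' ->
  let E := Eroot r e in
  let E' := Eprime n r s e in
  ((forall i j, (1 <= i)%N -> (i < j)%N -> (j < n)%N ->
     E i n * E j n - (r * s) *: (E j n * E i n) =
     E j n.-1 * E' i n - r ^+ 2 *: (E' i n * E j n.-1))) /\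
  ((forall i j k, (1 <= i)%N -> (i < j)%N -> (j < k)%N -> (k < n.-1)%N ->
     E j k * E' i k.+1 - r ^+ 2 *: (E' i k.+1 * E j k) =
     E' i k.+2 * E j k.+1 - (s ^+ 2)^-1 *: (E j k.+1 * E' i k.+2))) /\
  (E n.-1 n * E' n.-1 n = s ^+ 2 *: (E' n.-1 n * E n.-1 n)) /\
  ((forall i j, (1 <= i)%N -> (i < j)%N -> (j < n)%N ->
     E' i j * e n = (r * s) ^+ 2 *: (e n * E' i j))) /\
  ((forall i, (1 <= i)%N -> (i < n.-1)%N ->
     E' i n * E n.-1 n = E n.-1 n * E' i n)) /\
  ((forall i, (1 <= i)%N -> (i < n.-1)%N ->
     E' i n * E' n.-1 n = s ^+ 2 *: (E' n.-1 n * E' i n))) /\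
  ((forall i, (1 <= i)%N -> (i < n.-1)%N ->
     E' i n.-1 * E n.-1 n = s ^+ 2 *: (E n.-1 n * E' i n.-1))) /\
  (forall i, (1 <= i)%N -> (i < n.-1)%N ->
     E' i n.-1 * E' n.-1 n = (r * s ^+ 2) ^+ 2 *: (E' n.-1 n * E' i n.-1)).
Proof.
move=> _ r_neq0 s_neq0 r3s3 r4s4 n_ge2 HU; cbv zeta.
have rs2_neq0 := expr4_neq_sum_sqr_neq0 r4s4.
have rs3_neq0 := expr3_neq_sum_neq0 r3s3.
have far := e_comm_far r_neq0 s_neq0 HU.
have serreL := serre_qcommL r_neq0 s_neq0 HU.
have serreR := serre_qcommR r_neq0 s_neq0 HU.
have serre_last := serre_qcomm_last r_neq0 s_neq0 HU n_ge2.
split; first by move=> *; apply: qcomm_Eroot_n_Eroot_n.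
split; first by move=> *; apply: qcomm_Eroot_Eprime_shift.
split; first by apply/qcomm_eq0/qcomm_Eroot_Eprime_top.
split; first by move=> *; apply/qcomm_eq0/qcomm_Eprime_en.
split; first by move=> *; apply: Eprime_n_comm_Eroot_top.
split; first by move=> *; apply/qcomm_eq0/qcomm_Eprime_n_Eprime_top.
split; first by move=> *; apply/qcomm_eq0/qcomm_Eprime_n1_Eroot_top.
by move=> *; apply/qcomm_eq0/qcomm_Eprime_n1_Eprime_top.
Qed.
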